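(* Let $\mathbf{M}$ be a right proper model category and let $f:X\to Y$ be a weak equivalence in $\mathbf{M}$. Then the function $f_\ast:\pi_0(\mathbf{Triv}/X)\to\pi_0(\mathbf{Triv}/Y)$, induced by sending an object $W\to X$ to the composite $W\to X\xrightarrow{f}Y$, is a bijection.
   Context: For an object $X$ of $\mathbf{M}$ with terminal object $\ast$, $\mathbf{Triv}/X$ is the category whose objects are morphisms $W\to X$ such that $W\to\ast$ is a weak equivalence, and whose morphisms are commutative triangles over $X$; $\pi_0$ denotes the set of path components. Right proper means weak equivalences are stable under pullback along fibrations. *)

From Stdlib Require Import Relations.

Set Implicit Arguments.
Unset Strict Implicit.

Record Category := {
  Ob :> Type;
  Hom : Ob -> Ob -> Type;
  idm : forall a, Hom a a;
  comp : forall a b c, Hom b c -> Hom a b -> Hom a c;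
  comp_assoc : forall a b c d (h : Hom c d) (g : Hom b c) (f : Hom a b),
      comp h (comp g f) = comp (comp h g) f;
  comp_id_l : forall a b (f : Hom a b), comp (idm b) f = f;
  comp_id_r : forall a b (f : Hom a b), comp f (idm a) = f
}.

Arguments Hom {C} : rename.
Arguments idm {C} a : rename.
Arguments comp {C a b c} : rename.

Section Limits.
Variable C : Category.

Definition IsTerminal (t : C) : Prop :=
  forall X : C, exists h : Hom X t, forall h' : Hom X t, h' = h.

Definition IsInitial (i : C) : Prop :=
  forall X : C, exists h : Hom i X, forall h' : Hom i X, h' = h.

Definition IsPullback (X Y Z P : C) (f : Hom X Z) (g : Hom Y Z)
    (p1 : Hom P X) (p2 : Hom P Y) : Prop :=
  comp f p1 = comp g p2 /\
  forall (Q : C) (q1 : Hom Q X) (q2 : Hom Q Y), comp f q1 = comp g q2 ->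
    exists h : Hom Q P, (comp p1 h = q1 /\ comp p2 h = q2) /\
      forall h' : Hom Q P, comp p1 h' = q1 -> comp p2 h' = q2 -> h' = h.

Definition IsPushout (X Y Z P : C) (f : Hom Z X) (g : Hom Z Y)
    (i1 : Hom X P) (i2 : Hom Y P) : Prop :=
  comp i1 f = comp i2 g /\
  forall (Q : C) (q1 : Hom X Q) (q2 : Hom Y Q), comp q1 f = comp q2 g ->
    exists h : Hom P Q, (comp h i1 = q1 /\ comp h i2 = q2) /\
      forall h' : Hom P Q, comp h' i1 = q1 -> comp h' i2 = q2 -> h' = h.

Definition IsRetractOf (A B A' B' : C) (f : Hom A B) (g : Hom A' B') : Prop :=
  exists (i : Hom A A') (r : Hom A' A) (j : Hom B B') (s : Hom B' B),
    comp r i = idm A /\ comp s j = idm B /\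
    comp g i = comp j f /\ comp f r = comp s g.

Definition HasLLP (A B X Y : C) (i : Hom A B) (p : Hom X Y) : Prop :=
  forall (u : Hom A X) (v : Hom B Y), comp p u = comp v i ->
    exists h : Hom B X, comp h i = u /\ comp p h = v.

End Limits.

(** * Model categories (Quillen closed model category axioms MC1--MC5,
    with finite limits and colimits and non-functorial factorizations) *)
Record ModelCategory := {
  MC :> Category;
  weq : forall a b : MC, Hom a b -> Prop;
  fib : forall a b : MC, Hom a b -> Prop;
  cof : forall a b : MC, Hom a b -> Prop;
  mc_terminal : exists t : MC, IsTerminal t;
  mc_initial : exists i : MC, IsInitial i;
  mc_pullbacks : forall (X Y Z : MC) (f : Hom X Z) (g : Hom Y Z),
      exists (P : MC) (p1 : Hom P X) (p2 : Hom P Y), IsPullback f g p1 p2;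
  mc_pushouts : forall (X Y Z : MC) (f : Hom Z X) (g : Hom Z Y),
      exists (P : MC) (i1 : Hom X P) (i2 : Hom Y P), IsPushout f g i1 i2;
  weq_comp : forall a b c (f : Hom a b) (g : Hom b c),
      weq f -> weq g -> weq (comp g f);
  weq_cancel_l : forall a b c (f : Hom a b) (g : Hom b c),
      weq g -> weq (comp g f) -> weq f;
  weq_cancel_r : forall a b c (f : Hom a b) (g : Hom b c),
      weq f -> weq (comp g f) -> weq g;
  weq_retract : forall a b a' b' (f : Hom a b) (g : Hom a' b'),
      IsRetractOf f g -> weq g -> weq f;
  fib_retract : forall a b a' b' (f : Hom a b) (g : Hom a' b'),
      IsRetractOf f g -> fib g -> fib f;
  cof_retract : forall a b a' b' (f : Hom a b) (g : Hom a' b'),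
      IsRetractOf f g -> cof g -> cof f;
  lift_cof_trivfib : forall a b x y (i : Hom a b) (p : Hom x y),
      cof i -> fib p -> weq p -> HasLLP i p;
  lift_trivcof_fib : forall a b x y (i : Hom a b) (p : Hom x y),
      cof i -> weq i -> fib p -> HasLLP i p;
  fact_cof_trivfib : forall a b (f : Hom a b),
      exists (c : MC) (i : Hom a c) (p : Hom c b),
        cof i /\ fib p /\ weq p /\ comp p i = f;
  fact_trivcof_fib : forall a b (f : Hom a b),
      exists (c : MC) (i : Hom a c) (p : Hom c b),
        cof i /\ weq i /\ fib p /\ comp p i = f
}.

Arguments weq {M a b} : rename.
Arguments fib {M a b} : rename.
Arguments cof {M a b} : rename.

Definition RightProper (M : ModelCategory) : Prop :=
  forall (X Y Z P : M) (f : Hom X Z) (g : Hom Y Z) (p1 : Hom P X) (p2 : Hom P Y),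
    IsPullback f g p1 p2 -> fib g -> weq f -> weq p2.

Section Triv.
Variables (M : ModelCategory) (t : M).

(** objects: morphisms W -> X such that (the unique) W -> t is a weak equivalence *)
Record TrivOb (X : M) := {
  tw : M;
  tp : Hom tw X;
  tw_triv : exists h : Hom tw t, weq h
}.

Definition TrivHom (X : M) (a b : TrivOb X) : Type :=
  { h : Hom (tw a) (tw b) | comp (tp b) h = tp a }.

(** same path component of Triv/X: the equivalence relation generated by
    the existence of a morphism *)
Definition TrivConnected (X : M) : relation (TrivOb X) :=
  clos_refl_sym_trans (TrivOb X) (fun a b => inhabited (TrivHom a b)).

Definition trivPush (X Y : M) (f : Hom X Y) (a : TrivOb X) : TrivOb Y :=
  {| tw := tw a; tp := comp f (tp a); tw_triv := tw_triv a |}.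

End Triv.

(** Replace [c : W -> Y] in [Triv/Y] by a factorization [W -> V -> Y] into a
    trivial cofibration followed by a fibration, and pull [f] back along the
    fibration [V -> Y].  By right properness the pullback [P -> V] is a weak
    equivalence, so [P -> X] lies in [Triv/X]; it is sent by [f_*] to an object
    connected to [c] through [V], which gives surjectivity.  Lifting trivial
    cofibrations against fibrations and the universal property of the pullback
    show that this construction carries morphisms of [Triv/Y] to morphisms of
    [Triv/X], hence connected objects to connected objects; since [a] maps to
    the pullback attached to [f_* a], injectivity follows. *)
From Stdlib Require Import Relations.
Set Implicit Arguments.
Unset Strict Implicit.

Section ClosureTransport.
Variables (A B : Type) (R : relation A) (S : relation B).

Lemma clos_rst_map (F : A -> B) :
  (forall x y, R x y -> S (F x) (F y)) ->
  forall x y, clos_refl_sym_trans A R x y ->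
    clos_refl_sym_trans B S (F x) (F y).
Proof.
  intros HF x y Hxy.
  induction Hxy as [x y Hxy | x | x y _ IH | x y z _ IH1 _ IH2].
  - apply rst_step. exact (HF x y Hxy).
  - apply rst_refl.
  - apply rst_sym. exact IH.
  - apply rst_trans with (F y); assumption.
Qed.

Variable L : A -> B -> Prop.
Hypothesis R_refl : reflexive A R.
Hypothesis L_total : forall x, exists y, L x y.
Hypothesis L_step : forall x x' y y', R x x' -> L x y -> L x' y' ->
  clos_refl_sym_trans B S y y'.

Lemma clos_rst_transport x x' : clos_refl_sym_trans A R x x' ->
  forall y y', L x y -> L x' y' -> clos_refl_sym_trans B S y y'.
Proof.
  induction 1 as [x x' Hxx' | x | x x' _ IH | x x' x'' _ IH1 _ IH2];
    intros y y' Hy Hy'.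
  - exact (L_step Hxx' Hy Hy').
  - exact (L_step (R_refl x) Hy Hy').
  - apply rst_sym. exact (IH _ _ Hy' Hy).
  - destruct (L_total x') as [ym Hym].
    apply rst_trans with ym; [exact (IH1 _ _ Hy Hym) | exact (IH2 _ _ Hym Hy')].
Qed.

End ClosureTransport.

Section TrivOver.
Variables (M : ModelCategory) (t : M).

Lemma triv_weq_cod (Ht : IsTerminal t) (A B : M) (g : Hom A B) :
  weq g -> (exists h : Hom A t, weq h) -> exists h : Hom B t, weq h.
Proof.
  intros Hg [h Hh]. destruct (Ht B) as [hB _]. destruct (Ht A) as [hA HA].
  exists hB. apply (weq_cancel_r (f := g) Hg).
  rewrite (HA (comp hB g)), <- (HA h). exact Hh.
Qed.

Lemma triv_weq_dom (A B : M) (g : Hom A B) :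
  weq g -> (exists h : Hom B t, weq h) -> exists h : Hom A t, weq h.
Proof.
  intros Hg [h Hh]. exists (comp h g). exact (weq_comp Hg Hh).
Qed.

Lemma trivHom_refl (X : M) (a : TrivOb t X) : inhabited (TrivHom a a).
Proof. constructor. exists (idm (tw a)). apply comp_id_r. Qed.

Lemma trivConnected_hom (X : M) (a b : TrivOb t X) :
  TrivHom a b -> TrivConnected a b.
Proof. intros h. apply rst_step. constructor. exact h. Qed.

Variables (X Y : M) (f : Hom X Y).

Lemma trivPush_hom (a b : TrivOb t X) :
  TrivHom a b -> TrivHom (trivPush f a) (trivPush f b).
Proof.
  intros [h Hh]. exists h. simpl. rewrite <- comp_assoc, Hh. reflexivity.
Qed.

Lemma trivPush_connected (a b : TrivOb t X) :
  TrivConnected a b -> TrivConnected (trivPush f a) (trivPush f b).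
Proof.
  apply clos_rst_map. intros x y [h]. constructor. exact (trivPush_hom h).
Qed.

(** [a] is the pullback of [f] along a fibrant replacement [c -> v] of [c]. *)
Definition PullbackLift (c : TrivOb t Y) (a : TrivOb t X) : Prop :=
  exists (v : TrivOb t Y) (j : Hom (tw c) (tw v)) (p : Hom (tw a) (tw v)),
    cof j /\ weq j /\ fib (tp v) /\ comp (tp v) j = tp c /\
    IsPullback f (tp v) (tp a) p.

Lemma pullbackLift_exists (Ht : IsTerminal t) (HRP : RightProper M)
    (Hf : weq f) (c : TrivOb t Y) :
  exists a, PullbackLift c a.
Proof.
  destruct (fact_trivcof_fib (tp c)) as (V & j & q & Hj & Hwj & Hq & Hqj).
  pose (v := {| tw := V; tp := q; tw_triv := triv_weq_cod Ht Hwj (tw_triv c) |}).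
  destruct (mc_pullbacks f q) as (P & p1 & p2 & HP).
  pose proof (HRP _ _ _ _ _ _ _ _ HP Hq Hf) as Hp2.
  exists {| tw := P; tp := p1; tw_triv := triv_weq_dom Hp2 (tw_triv v) |}.
  exists v, j, p2. auto.
Qed.

(** A lift [l] of [c -> c' -> v'] through the trivial cofibration [c -> v]
    followed by the pullback property of [a'] gives the morphism [a -> a']. *)
Lemma pullbackLift_hom (c c' : TrivOb t Y) (a a' : TrivOb t X) :
  TrivHom c c' -> PullbackLift c a -> PullbackLift c' a' ->
  inhabited (TrivHom a a').
Proof.
  intros [h Hh] (v & j & p & Hj & Hwj & Hq & Hqj & [Hp _])
    (v' & j' & p' & _ & _ & Hq' & Hqj' & [_ Hp'univ]).
  assert (Hsq : comp (tp v') (comp j' h) = comp (tp v) j)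
    by (rewrite comp_assoc, Hqj', Hh, Hqj; reflexivity).
  destruct (lift_trivcof_fib Hj Hwj Hq' Hsq) as (l & _ & Hl).
  assert (Hcone : comp f (tp a) = comp (tp v') (comp l p))
    by (rewrite comp_assoc, Hl; exact Hp).
  destruct (Hp'univ _ _ _ Hcone) as (k & [Hk _] & _).
  constructor. exact (exist _ k Hk).
Qed.

Lemma pullbackLift_connected (Ht : IsTerminal t) (HRP : RightProper M)
    (Hf : weq f) (c c' : TrivOb t Y) (a a' : TrivOb t X) :
  TrivConnected c c' -> PullbackLift c a -> PullbackLift c' a' ->
  TrivConnected a a'.
Proof.
  intros Hcc' Ha Ha'.
  refine (clos_rst_transport (L := PullbackLift) _ _ _ Hcc' Ha Ha').
  - intros x. apply trivHom_refl.
  - apply (pullbackLift_exists Ht HRP Hf).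
  - intros x x' y y' [h] Hy Hy'.
    destruct (pullbackLift_hom h Hy Hy') as [k].
    exact (trivConnected_hom k).
Qed.

Lemma pullbackLift_trivPush (a b : TrivOb t X) :
  PullbackLift (trivPush f a) b -> inhabited (TrivHom a b).
Proof.
  intros (v & j & p & _ & _ & _ & Hqj & [_ Hpuniv]).
  destruct (Hpuniv _ _ _ (eq_sym Hqj)) as (k & [Hk _] & _).
  constructor. exact (exist _ k Hk).
Qed.

Lemma trivPush_pullbackLift (c : TrivOb t Y) (a : TrivOb t X) :
  PullbackLift c a -> TrivConnected (trivPush f a) c.
Proof.
  intros (v & j & p & _ & _ & _ & Hqj & [Hp _]).
  apply rst_trans with v.
  - apply trivConnected_hom. exists p. exact (eq_sym Hp).
  - apply rst_sym, trivConnected_hom. exists j. exact Hqj.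
Qed.

End TrivOver.

Theorem mainTheorem13 (M : ModelCategory) (t : M) (Ht : IsTerminal t)
    (HRP : RightProper M) (X Y : M) (f : Hom X Y) (Hf : weq f) :
  (forall a b : TrivOb t X, TrivConnected a b ->
      TrivConnected (trivPush f a) (trivPush f b)) /\
  (forall a b : TrivOb t X, TrivConnected (trivPush f a) (trivPush f b) ->
      TrivConnected a b) /\
  (forall c : TrivOb t Y, exists a : TrivOb t X, TrivConnected (trivPush f a) c).
Proof.
  split; [|split].
  - apply trivPush_connected.
  - intros a b Hab.
    destruct (pullbackLift_exists Ht HRP Hf (trivPush f a)) as [a' Ha'].
    destruct (pullbackLift_exists Ht HRP Hf (trivPush f b)) as [b' Hb'].
    destruct (pullbackLift_trivPush Ha') as [ha].
    destruct (pullbackLift_trivPush Hb') as [hb].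
    apply rst_trans with a'; [exact (trivConnected_hom ha)|].
    apply rst_trans with b'; [exact (pullbackLift_connected Ht HRP Hf Hab Ha' Hb')|].
    apply rst_sym. exact (trivConnected_hom hb).
  - intros c. destruct (pullbackLift_exists Ht HRP Hf c) as [a Ha].
    exists a. exact (trivPush_pullbackLift Ha).
Qed.
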